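(* Let $k\ge2$, let $b$ be an irreducible Brauer diagram of size $k$ (i.e. $\mathrm{nc}(b\vee\mathbf{1}_k)=1$), and let $1\le i\ne j\le k$ and $e=e_{ij}$. Then $\mathrm{nc}(e\vee b)-\mathrm{nc}(b\vee\mathbf{1}_k)\in\{0,1\}$, and $\mathrm{nc}(e\vee b)=\mathrm{nc}(b\vee\mathbf{1}_k)+1$ if and only if $s(i)s(j)=-1$ for any orientation $s$ of $b$.
   Context: A Brauer diagram of size $k$ is a partition of $\{1,\dots,k,1',\dots,k'\}$ into two-element blocks (links). For partitions, $\vee$ is the join (finest common coarsening) and $\mathrm{nc}$ the number of blocks; $\mathbf{1}_k=\{\{x,x'\}:x\le k\}$. The projector $e_{ij}$ is the Brauer diagram $\{\{i,j\},\{i',j'\}\}\cup\{\{x,x'\}:x\ne i,j\}$. Orientation: let $\Gamma_b$ be the graph with vertices $\{1,\dots,k,1',\dots,k'\}$ whose edges are the links of $b$ together with the vertical edges $\{x,x'\}$, $x\le k$; each connected component is a cycle. An orientation of $b$ is a choice of orientation of each cycle of $\Gamma_b$; its sign function $s:\{1,\dots,k\}\to\{-1,1\}$ is $s(x)=1$ if the link of $b$ containing $x$ is incoming at $x$ for the chosen orientation, and $s(x)=-1$ otherwise. *)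

From mathcomp Require Import all_boot all_order all_algebra.
Set Implicit Arguments. Unset Strict Implicit. Unset Printing Implicit Defensive.

Section Brauer.
Variable k : nat.

(* vertices {1..k} (top, inl) and {1'..k'} (bottom, inr); 0-based indices *)
Definition vert := ('I_k + 'I_k)%type.
Definition top (x : 'I_k) : vert := inl x.
Definition bot (x : 'I_k) : vert := inr x.
Definition vidx (v : vert) : 'I_k := match v with inl x => x | inr x => x end.

Definition is_partition (P : {set {set vert}}) := partition P [set: vert].

Definition is_brauer (b : {set {set vert}}) :=
  is_partition b /\ (forall L, L \in b -> #|L| = 2).

Definition pjoin (P Q : {set {set vert}}) : {set {set vert}} :=
  equivalence_partition
    (connect (fun x y => (pblock P x == pblock P y) || (pblock Q x == pblock Q y)))
    [set: vert].

Definition nc (P : {set {set vert}}) : nat := #|P|.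

Definition one_k : {set {set vert}} := [set [set top x; bot x] | x : 'I_k].

Definition e_proj (i j : 'I_k) : {set {set vert}} :=
  [set [set top i; top j]; [set bot i; bot j]]
  :|: [set [set top x; bot x] | x in [set x : 'I_k | (x != i) && (x != j)]].

(* An orientation of b: a direction (head) for every edge of Gamma_b
   (hl L = head of link L, hv x = head of vertical edge {x,x'}) such that
   every cycle is a directed cycle, i.e. at every vertex exactly one of its
   two incident edges is incoming. *)
Definition is_orientation (b : {set {set vert}}) (hl : {set vert} -> vert)
  (hv : 'I_k -> vert) :=
  [/\ forall L, L \in b -> hl L \in L,
      forall x, hv x = top x \/ hv x = bot x
    & forall v, (hl (pblock b v) == v) (+) (hv (vidx v) == v)].

Definition orient_sign (b : {set {set vert}}) (hl : {set vert} -> vert)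
  (x : 'I_k) : int :=
  if hl (pblock b (top x)) == top x then 1%Z else (-1)%Z.

End Brauer.

From mathcomp Require Import all_boot all_algebra zify.
Set Implicit Arguments. Unset Strict Implicit. Unset Printing Implicit Defensive.

(* Irreducibility says that Γ_b is a single cycle, which an orientation turns
   into the orbit of the successor map [next].  In e ∨ b every vertex is joined
   to i or i', so nc(e ∨ b) is 1 or 2 according as i and i' are joined.
   Deleting the vertical edges at i and j cuts the cycle into an arc from the
   head of {i,i'} to the tail of {j,j'} and an arc from the head of {j,j'} to
   the tail of {i,i'}, whose four ends are reconnected by the links {i,j} and
   {i',j'} of e.  If the heads at i and j lie on the same side (s(i) = s(j)),
   these links merge the two arcs into one cycle through i and i'.  Otherwise
   each link closes up one arc, and membership in the first arc is invariant
   under e ∨ b but separates i from i'. *)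

Lemma pblock_unique (T : finType) (P : {set {set T}}) x B :
  B \in P -> x \in B -> (forall B', B' \in P -> x \in B' -> B' = B) ->
  pblock P x = B.
Proof.
move=> PB xB uniqB; rewrite /pblock; case: pickP => [B' /andP[PB' xB'] | /(_ B)].
  exact: uniqB.
by rewrite /= PB xB.
Qed.

Lemma card2_mem (T : finType) (L : {set T}) x y z :
  #|L| = 2 -> x \in L -> y \in L -> z \in L -> x != y -> z = x \/ z = y.
Proof.
move/eqP/cards2P=> [a [c [_ ->]]]; rewrite !inE.
by do 3![case/orP=> /eqP->]; rewrite ?eqxx //; auto.
Qed.

Section ConnectClasses.
Variables (T : finType) (R : rel T).
Local Notation classes := (equivalence_partition (connect R) [set: T]).

Lemma connect_of_card_classes1 : #|classes| = 1 -> forall x y, connect R x y.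
Proof.
move=> /eqP/cards1P[B classesE] x y.
have class_in z : [set w in [set: T] | connect R z w] \in [set B].
  by rewrite -classesE; apply: imset_f.
move: (class_in x) (class_in y); rewrite !inE => /eqP Ex /eqP Ey.
have : y \in [set w in [set: T] | connect R y w] by rewrite !inE connect0.
by rewrite Ey -Ex !inE.
Qed.

Lemma card_classes_two a c : symmetric R ->
  (forall x, connect R x a || connect R x c) ->
  #|classes| = if connect R a c then 1 else 2.
Proof.
move=> symR near_ac; have csym := sym_connect_sym symR.
set cls := fun x => [set y in [set: T] | connect R x y].
have clsE x y : connect R x y -> cls x = cls y.
  move=> xy; apply/setP => z; rewrite !inE /=; apply/idP/idP => [xz|].
    by apply: connect_trans xz; rewrite csym.
  exact: connect_trans.
have -> : classes = [set cls a; cls c].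
  apply/setP => B; rewrite !inE; apply/imsetP/idP => [[x _ ->]|].
    by rewrite -/(cls x); case/orP: (near_ac x) => /clsE ->; rewrite eqxx ?orbT.
  by case/orP => /eqP ->; [exists a | exists c].
rewrite cards2; case: ifPn => [/clsE -> | nac]; first by rewrite eqxx.
suff -> : cls a != cls c by [].
apply: contraNneq nac => Eac.
have : c \in cls c by rewrite !inE connect0.
by rewrite -Eac !inE.
Qed.

End ConnectClasses.

Section CycleArcs.
Variables (T : finType) (f : T -> T) (u : T).
Hypotheses (f_inj : injective f) (u_gen : forall v, fconnect f u v).
Local Notation pos := (findex f u).

Lemma findex_inj : injective pos.
Proof.
by move=> x y Exy; rewrite -(iter_findex (u_gen x)) -(iter_findex (u_gen y)) Exy.
Qed.

Lemma findex_f x : pos (f x) = if (pos x).+1 < order f u then (pos x).+1 else 0.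
Proof.
have -> : f x = iter (pos x).+1 f u by rewrite iterS iter_findex.
case: ifPn => [/findex_iter // | ]; rewrite -leqNgt => ge_order.
have -> : (pos x).+1 = order f u.
  by apply/eqP; rewrite eqn_leq ge_order findex_max.
by rewrite iter_order // findex0.
Qed.

Lemma findex_f_neq x : f x != u -> pos (f x) = (pos x).+1.
Proof.
move=> fxu; move: (findex_f x); case: ifP => // _ /eqP.
by rewrite findex_eq0 eq_sym (negbTE fxu).
Qed.

Lemma findex_pred_max x y : f x = u -> pos y <= pos x.
Proof.
move=> fxu; move: (findex_f x) (findex_max (u_gen y)); rewrite fxu findex0.
by case: ifP => //; lia.
Qed.

Lemma ltn_findex_f w x : f x != u -> f x != w -> (pos (f x) < pos w) = (pos x < pos w).
Proof.
move=> fxu fxw; have : pos (f x) != pos w by apply: contra fxw => /eqP/findex_inj->.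
rewrite findex_f_neq // => neq; apply/idP/idP; lia.
Qed.

Lemma findex_pred_lt w x : f x = w -> w != u -> pos x < pos w.
Proof. by move=> <- fxu; rewrite findex_f_neq. Qed.

Lemma connect_arc (R : rel T) x :
  (forall y, pos y < pos x -> R y (f y)) -> connect R u x.
Proof.
move=> edge; rewrite -(iter_findex (u_gen x)).
have : pos x <= pos x by [].
elim: {-2}(pos x) => [|m IH] le_m; first exact: connect0.
have lt_m : m < order f u by have := findex_max (u_gen x); lia.
apply: connect_trans (IH (ltnW le_m)) (connect1 _).
by rewrite iterS; apply: edge; rewrite findex_iter.
Qed.

End CycleArcs.

Section Vertices.
Variable k : nat.
Implicit Types (u v : vert k) (i j : 'I_k).

Definition flip v : vert k := match v with inl x => inr x | inr x => inl x end.

Lemma vidx_flip v : vidx (flip v) = vidx v. Proof. by case: v. Qed.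
Lemma flipK : involutive flip. Proof. by case. Qed.
Lemma flip_neq v : flip v != v. Proof. by case: v. Qed.

Lemma same_vidx u v : vidx u = vidx v -> u = v \/ u = flip v.
Proof. by case: u; case: v => x y /= ->; auto. Qed.

Lemma pblock_one_k v : pblock (one_k k) v = [set top (vidx v); bot (vidx v)].
Proof.
apply: pblock_unique; first exact: imset_f.
  by case: v => x; rewrite !inE eqxx ?orbT.
by move=> B /imsetP[x _ ->]; case: v => y; rewrite !inE => /orP[] /eqP [->].
Qed.

Lemma vidx_pblock_one_k u v :
  pblock (one_k k) u = pblock (one_k k) v -> vidx u = vidx v.
Proof.
rewrite !pblock_one_k => Euv.
have : top (vidx u) \in [set top (vidx v); bot (vidx v)] by rewrite -Euv !inE eqxx.
by rewrite !inE => /orP[] /eqP [].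
Qed.

Definition e_block i j v : {set vert k} :=
  if (vidx v != i) && (vidx v != j) then [set top (vidx v); bot (vidx v)]
  else if v is inl _ then [set top i; top j] else [set bot i; bot j].

Lemma mem_e_block i j v : v \in e_block i j v.
Proof.
rewrite /e_block; case: ifPn => [_ | ]; first by case: v => x; rewrite !inE eqxx ?orbT.
by rewrite negb_and !negbK; case: v => x /= /orP[] /eqP->; rewrite !inE eqxx ?orbT.
Qed.

Lemma pblock_e_proj i j v : pblock (e_proj i j) v = e_block i j v.
Proof.
apply: pblock_unique; [|exact: mem_e_block|].
  rewrite /e_block; case: ifP => [vij | _]; last by case: v; rewrite !inE eqxx ?orbT.
  by rewrite inE; apply/orP; right; apply: imset_f; rewrite inE.
move=> B; rewrite !inE => /orP[/orP[] /eqP-> | /imsetP[x]].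
- by rewrite !inE /e_block => /orP[] /eqP-> /=; rewrite eqxx ?andbF.
- by rewrite !inE /e_block => /orP[] /eqP-> /=; rewrite eqxx ?andbF.
- by rewrite inE => xij ->; rewrite !inE /e_block => /orP[] /eqP-> /=; rewrite xij.
Qed.

Lemma mem_e_block_cases i j u v : v \in e_block i j u ->
  [\/ vidx v = vidx u /\ (vidx u != i) && (vidx u != j),
      u \in [set top i; top j] /\ v \in [set top i; top j]
    | u \in [set bot i; bot j] /\ v \in [set bot i; bot j]].
Proof.
rewrite /e_block; case: ifPn => [uij | ].
  by rewrite !inE => /orP[] /eqP->; constructor 1.
rewrite negb_and !negbK => uij; case: u uij => x /= xij vB; [constructor 2|constructor 3];
  by split; rewrite // !inE; case/orP: xij => /eqP->; rewrite eqxx ?orbT.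
Qed.

End Vertices.

Definition join_rel k (P Q : {set {set vert k}}) : rel (vert k) :=
  fun u v => (pblock P u == pblock P v) || (pblock Q u == pblock Q v).

Lemma join_rel_sym k (P Q : {set {set vert k}}) : symmetric (join_rel P Q).
Proof. by move=> u v; rewrite /join_rel eq_sym [pblock Q u == _]eq_sym. Qed.

Section Orientation.
Variables (k : nat) (b : {set {set vert k}}).
Variables (hl : {set vert k} -> vert k) (hv : 'I_k -> vert k).
Hypotheses (hb : is_brauer b) (ho : is_orientation b hl hv).
Implicit Types (u v : vert k) (x y : 'I_k).
Local Notation link v := (pblock b v).

Lemma mem_link v : v \in link v.
Proof. by rewrite mem_pblock (cover_partition hb.1) inE. Qed.

Lemma link_mem v : link v \in b.
Proof. by apply: pblock_mem; rewrite (cover_partition hb.1) inE. Qed.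

Lemma head_mem_link v : hl (link v) \in link v.
Proof. by case: ho => head_in _ _; apply/head_in/link_mem. Qed.

Lemma link_head v : link (hl (link v)) = link v.
Proof. exact: def_pblock (partition_trivIset hb.1) (link_mem v) (head_mem_link v). Qed.

Lemma hv_top_bot x : hv x = top x \/ hv x = bot x.
Proof. by case: ho. Qed.

Lemma vidx_hv x : vidx (hv x) = x.
Proof. by case: (hv_top_bot x) => ->. Qed.

Definition tail x := flip (hv x).

Lemma vidx_tail x : vidx (tail x) = x.
Proof. by rewrite vidx_flip vidx_hv. Qed.

Lemma tail_neq_hv x y : tail x != hv y.
Proof.
apply/eqP => Exy; have Ey : x = y by rewrite -(vidx_tail x) Exy vidx_hv.
by move: Exy; rewrite Ey; apply/eqP/flip_neq.
Qed.

Lemma hv_or_tail v : v = hv (vidx v) \/ v = tail (vidx v).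
Proof.
rewrite /tail; case: (same_vidx (vidx_hv (vidx v))) => ->; first by left.
by right; rewrite flipK.
Qed.

Lemma link_inE v : (hl (link v) == v) = (v == tail (vidx v)).
Proof.
case: ho => _ _ /(_ v); case: (hv_or_tail v) => Ev.
  rewrite -Ev eqxx addbT => /negbTE->.
  by rewrite {1}Ev eq_sym (negbTE (tail_neq_hv _ _)).
have -> : (hv (vidx v) == v) = false.
  by rewrite {2}Ev eq_sym (negbTE (tail_neq_hv _ _)).
by rewrite addbF => ->; rewrite -Ev eqxx.
Qed.

Lemma head_is_tail v : hl (link v) = tail (vidx (hl (link v))).
Proof. by apply/eqP; rewrite -link_inE link_head. Qed.

(* At the tail of its vertical edge a vertex leaves along that edge; anywhere
   else its link is outgoing and leads to the head of the link. *)
Definition next v := if v == tail (vidx v) then flip v else hl (link v).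

Lemma next_tail x : next (tail x) = hv x.
Proof. by rewrite /next vidx_tail eqxx /tail flipK. Qed.

Lemma link_head_other u v :
  u != tail (vidx u) -> link u = link v -> u != v -> hl (link u) = v.
Proof.
move=> ntu Luv neq; have v_in : v \in link u by rewrite Luv mem_link.
have [Eu | //] := card2_mem (hb.2 _ (link_mem u)) (mem_link u) v_in (head_mem_link u) neq.
by move: ntu; rewrite -link_inE Eu eqxx.
Qed.

Lemma next_inj : injective next.
Proof.
have tail_head u v : u == tail (vidx u) -> flip u != hl (link v).
  by move=> /eqP->; rewrite flipK head_is_tail eq_sym tail_neq_hv.
move=> u v; rewrite /next.
case: ifPn => [tu | ntu]; case: ifPn => [tv | ntv] Euv.
- exact: (can_inj (@flipK k) Euv).
- by move: (tail_head u v tu); rewrite Euv eqxx.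
- by move: (tail_head v u tv); rewrite Euv eqxx.
have [// | neq] := eqVneq u v.
have Luv : link u = link v by rewrite -link_head Euv link_head.
by move: ntv; rewrite -link_inE -Euv (link_head_other ntu Luv neq) eqxx.
Qed.

Lemma flip_tail x : flip (tail x) = hv x.
Proof. exact: flipK. Qed.

Lemma neq_tail v x : v != tail (vidx v) -> v != tail x.
Proof. by apply: contraNneq => ->; rewrite vidx_tail. Qed.

Lemma next_same_link u v : link u = link v -> u != v ->
  (u != tail (vidx u) /\ next u = v) \/ (v != tail (vidx v) /\ next v = u).
Proof.
move=> Luv neq; case: (boolP (u == tail (vidx u))) => [tu | ntu].
  have hu : hl (link v) = u by apply/eqP; rewrite -Luv link_inE.
  have ntv : v != tail (vidx v) by rewrite -link_inE hu.
  by right; rewrite /next (negbTE ntv) hu.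
by left; rewrite /next (negbTE ntu) (link_head_other ntu Luv neq).
Qed.

Lemma fconnect_next u v : join_rel b (one_k k) u v -> fconnect next u v.
Proof.
have next_sym := fconnect_sym next_inj.
case/orP => [/eqP Luv | /eqP/vidx_pblock_one_k/same_vidx [-> | ->]].
- have [-> | neq] := eqVneq u v; first exact: connect0.
  case: (next_same_link Luv neq) => -[_ <-]; first exact: fconnect1.
  by rewrite next_sym; apply: fconnect1.
- exact: connect0.
- move: (vidx v) (hv_or_tail v) => z [-> | ->].
    by rewrite -/(tail z) -next_tail; apply: fconnect1.
  by rewrite next_sym flip_tail -next_tail; apply: fconnect1.
Qed.

Lemma join_e_next i j v : v != tail i -> v != tail j ->
  join_rel (e_proj i j) b v (next v).
Proof.
move=> vi vj; rewrite /join_rel /next; case: ifPn => [/eqP tv | _].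
  have [zi zj] : vidx v != i /\ vidx v != j.
    by split; [apply: contraNneq vi | apply: contraNneq vj] => E; rewrite tv E.
  by rewrite !pblock_e_proj /e_block vidx_flip zi zj eqxx.
by rewrite link_head eqxx orbT.
Qed.

Lemma orient_signE x : orient_sign b hl x = if hv x == top x then (-1)%Z else 1%Z.
Proof.
by rewrite /orient_sign link_inE /= /tail; case: (hv_top_bot x) => ->; rewrite /= eqxx.
Qed.

End Orientation.

Section Reduction.
Variables (k : nat) (b : {set {set vert k}}) (i j : 'I_k).
Hypothesis irr : forall u v, connect (join_rel b (one_k k)) u v.
Local Notation R := (join_rel (e_proj i j) b).

Lemma connect_top_or_bot v : connect R v (top i) || connect R v (bot i).
Proof.
pose P := [pred v | connect R v (top i) || connect R v (bot i)].
have P_ij u : (vidx u == i) || (vidx u == j) -> u \in P.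
  case: u => x /= /orP[] /eqP->; rewrite inE ?connect0 ?orbT //; apply/orP;
    [left | right]; apply: connect1;
    by rewrite /join_rel !pblock_e_proj /e_block /= !eqxx !andbF eqxx.
have P_closed : closed (join_rel b (one_k k)) P.
  apply: (intro_closed (sym_connect_sym (join_rel_sym b (one_k k)))) => u w uw Pu.
  case: (boolP ((vidx w == i) || (vidx w == j))) => [/P_ij // | wij].
  have wu : R w u.
    move: uw; rewrite join_rel_sym => /orP[Lwu | /eqP/vidx_pblock_one_k Ewu].
      by rewrite /join_rel Lwu orbT.
    move: wij; rewrite negb_or => /andP[wi wj].
    by rewrite /join_rel !pblock_e_proj /e_block -Ewu wi wj eqxx.
  by rewrite inE; case/orP: Pu => /(connect_trans (connect1 wu)) ->; rewrite ?orbT.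
suff : v \in P by rewrite inE.
by rewrite (closed_connect P_closed (irr v (top i))) P_ij //= eqxx.
Qed.

Lemma nc_pjoin_e_proj :
  nc (pjoin (e_proj i j) b) = if connect R (top i) (bot i) then 1 else 2.
Proof. exact: card_classes_two (join_rel_sym _ _) connect_top_or_bot. Qed.

End Reduction.

Section Projector.
Variables (k : nat) (b : {set {set vert k}}).
Variables (hl : {set vert k} -> vert k) (hv : 'I_k -> vert k).
Hypotheses (hb : is_brauer b) (ho : is_orientation b hl hv).
Variables (i j : 'I_k).
Hypotheses (nij : i != j) (irr : forall u v, connect (join_rel b (one_k k)) u v).
Local Notation R := (join_rel (e_proj i j) b).
Local Notation next := (next b hl hv).
Local Notation pos := (findex next (hv i)).

Lemma fconnect_next_hv v : fconnect next (hv i) v.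
Proof. exact: connect_sub (fconnect_next hb ho) _ _ (irr _ _). Qed.

Lemma findex_le_tail v : pos v <= pos (tail hv i).
Proof. exact: findex_pred_max (next_inj hb ho) fconnect_next_hv _ _ (next_tail ho i). Qed.

Lemma connect_same_side :
  (hv i == top i) = (hv j == top j) -> connect R (top i) (bot i).
Proof.
move=> side.
have arc : connect R (hv i) (tail hv j).
  apply: (connect_arc fconnect_next_hv) => v lt_v; apply: (join_e_next hb ho).
    by apply: contraTneq lt_v => ->; rewrite -leqNgt findex_le_tail.
  by apply: contraTneq lt_v => ->; rewrite ltnn.
have tails : R (tail hv j) (tail hv i).
  rewrite /join_rel !pblock_e_proj /e_block /tail !vidx_flip !(vidx_hv ho).
  rewrite !eqxx /= !andbF; move: side.
  by case: (hv_top_bot ho i) => ->; case: (hv_top_bot ho j) => ->;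
    rewrite /top /bot /= !eqxx.
have := connect_trans arc (connect1 tails); rewrite /tail.
case: (hv_top_bot ho i) => -> //=.
by rewrite (sym_connect_sym (join_rel_sym _ _)).
Qed.

(* The arc from [hv i] to [tail hv j], since [next (tail hv j) = hv j]. *)
Definition first_arc := [pred v | pos v < pos (hv j)].

Lemma first_arc_next v : v != tail hv i -> v != tail hv j ->
  (next v \in first_arc) = (v \in first_arc).
Proof.
move=> vi vj; rewrite !inE; apply: (ltn_findex_f (next_inj hb ho) fconnect_next_hv).
  by apply: contra vi; rewrite -(next_tail ho i) => /eqP/(next_inj hb ho)->.
by apply: contra vj; rewrite -(next_tail ho j) => /eqP/(next_inj hb ho)->.
Qed.

Lemma first_arc_flip v : vidx v != i -> vidx v != j ->
  (flip v \in first_arc) = (v \in first_arc).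
Proof.
have tail_neq z x : z != x -> tail hv z != tail hv x.
  by apply: contraNneq => /(congr1 (@vidx k)); rewrite !(vidx_tail ho) => ->.
move: (vidx v) (hv_or_tail ho v) => z [-> | ->] zi zj.
  by rewrite -/(tail hv z) -(next_tail ho z) first_arc_next ?tail_neq.
by rewrite flip_tail -(next_tail ho z) first_arc_next ?tail_neq.
Qed.


Lemma first_arc_ends :
  [/\ hv i \in first_arc, tail hv i \notin first_arc,
      tail hv j \in first_arc & hv j \notin first_arc].
Proof.
have hv_ji : hv j != hv i.
  by apply: contraNneq nij => E; rewrite -(vidx_hv ho i) -E (vidx_hv ho).
split; rewrite inE ?ltnn // -?leqNgt ?findex_le_tail //.
  by rewrite findex0 lt0n findex_eq0 eq_sym.
exact: (findex_pred_lt (next_inj hb ho) fconnect_next_hv (next_tail ho j)).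
Qed.

Lemma first_arc_closed :
  (hv i == top i) != (hv j == top j) -> closed R first_arc.
Proof.
move=> side; have [ci cti ctj cj] := first_arc_ends.
have [c_top c_bot] : (top i \in first_arc) = (top j \in first_arc)
                  /\ (bot i \in first_arc) = (bot j \in first_arc).
  move: side ci cti ctj cj; rewrite /tail /top /bot.
  by case: (hv_top_bot ho i) => ->; case: (hv_top_bot ho j) => ->;
    rewrite /= ?eqxx //= => _ -> /negbTE-> -> /negbTE->.
move=> u v /orP[/eqP E | /eqP L].
  rewrite !pblock_e_proj in E.
  have : v \in e_block i j u by rewrite E mem_e_block.
  case/mem_e_block_cases => [[Evu /andP[ui uj]] | [] | []].
  - by case: (same_vidx Evu) => ->; last rewrite first_arc_flip.
  - by rewrite !in_set2 => /orP[]/eqP-> /orP[]/eqP->; rewrite ?c_top.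
  - by rewrite !in_set2 => /orP[]/eqP-> /orP[]/eqP->; rewrite ?c_bot.
have [-> // | neq] := eqVneq u v.
case: (next_same_link hb ho L neq) => -[nt <-];
  by rewrite first_arc_next //; apply: (neq_tail ho _ nt).
Qed.

Lemma disconnect_opposite_sides :
  (hv i == top i) != (hv j == top j) -> ~~ connect R (top i) (bot i).
Proof.
move=> side; apply/negP => /(closed_connect (first_arc_closed side)).
have [ci cti _ _] := first_arc_ends; move: ci cti; rewrite /tail.
by case: (hv_top_bot ho i) => -> /= -> /negbTE->.
Qed.

End Projector.

Unset Implicit Arguments.

Theorem proposition4p7 (k : nat) (b : {set {set vert k}}) (i j : 'I_k) :
  2 <= k ->
  is_brauer b ->
  nc (pjoin b (one_k k)) = 1 ->
  i != j ->
  (nc (pjoin (e_proj i j) b) = nc (pjoin b (one_k k))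
   \/ nc (pjoin (e_proj i j) b) = (nc (pjoin b (one_k k))).+1)
  /\ (forall (hl : {set vert k} -> vert k) (hv : 'I_k -> vert k),
        is_orientation b hl hv ->
        (nc (pjoin (e_proj i j) b) = (nc (pjoin b (one_k k))).+1
         <-> (orient_sign b hl i * orient_sign b hl j = -1)%R)).
Proof.
move=> _ hb hirr nij.
have irr := connect_of_card_classes1 hirr.
rewrite hirr (nc_pjoin_e_proj i j irr); split; first by case: ifP; [left | right].
move=> hl hv ho; rewrite !(orient_signE ho).
have [same | opp] := eqVneq (hv i == top i) (hv j == top j).
  rewrite (connect_same_side hb ho irr same).
  by move: same; case: (hv i == top i); case: (hv j == top j).
rewrite (negbTE (disconnect_opposite_sides hb ho nij irr opp)).
by move: opp; case: (hv i == top i); case: (hv j == top j).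
Qed.
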